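(* Let $\phi(\zeta,t)=-q_t+d_t\zeta+\int_0^\infty(e^{-\zeta x}-1)\pi_t(\mathrm dx)$ for $\zeta\in\mathbb H$ and a.e. $t\ge0$, where $q_t\ge0$, $d_t\in\mathbb R$, $\pi_t$ are nonnegative Borel measures on $(0,\infty)$, $t\mapsto q_t$ and $t\mapsto d_t$ are in $L^1_{\rm loc}$, and $\min\{x,1\}\pi_t(\mathrm dx)$ is locally integrable in $t$. Let $(v_{s,t})$ be the absolutely continuous reverse evolution family (contained in $\mathcal{BF}$) with Herglotz vector field $\phi$, and let $(Z_t)$ be the associated branching process. Then $\mathbb P^{(s,x)}[T_0^s<\infty]=0$ for every $x>0$ and $s\ge0$.
   Context: $\mathbb H=\{\operatorname{Re}\zeta>0\}$, $\Delta=\{(s,t):0\le s\le t\}$; $L^1_{\rm loc}$: integrable on compact subintervals of $[0,\infty)$. A family of nonnegative measures $(\rho_t)$ is locally integrable in $t$ if $t\mapsto\rho_t(B)$ is measurable for all Borel $B$ and $t\mapsto\rho_t(\text{total})$ is in $L^1_{\rm loc}$. $\mathcal{BF}$: Bernstein functions not identically zero, extended to $\mathbb H$. The absolutely continuous reverse evolution family $(v_{s,t})$ with Herglotz vector field $\phi$ is defined by: $s\mapsto v_{s,t}(\zeta)$ is the unique solution of $\frac{\mathrm d}{\mathrm ds}v(s)=\phi(v(s),s)$ a.e. on $[0,t]$, $v(t)=\zeta$. The associated branching process $(Z_t)$ on $[0,\infty]$ is a Markov family with probabilities $\mathbb P^{(s,x)}$ whose transition kernels $k_{s,t}$ (with $k_{s,t}(0,\cdot)=\delta_0$,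 $k_{s,t}(\infty,\cdot)=\delta_\infty$) satisfy $\int_{[0,\infty)}e^{-\theta y}k_{s,t}(x,\mathrm dy)=e^{-xv_{s,t}(\theta)}$, realized with sample paths in $D[0,\infty)$ (càdlàg paths into $[0,\infty]$ absorbed at $0$ and at $\infty$ once they or their left limits reach these points). $T_0^s=\inf\{t\ge s:Z_t=0\}$. *)

From HB Require Import structures.
From mathcomp Require Import all_boot all_order all_algebra.
From mathcomp Require Import all_classical all_reals all_analysis.
From mathcomp Require Import measurable_realfun.
Set Implicit Arguments. Unset Strict Implicit. Unset Printing Implicit Defensive.
Import Order.TTheory GRing.Theory Num.Theory.
Import numFieldNormedType.Exports.
Local Open Scope classical_set_scope.
Local Open Scope ring_scope.

Definition herglotz_phi (R : realType) (q d : R -> R)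
  (pi : R -> {measure set R -> \bar R}) (z t : R) : R :=
  - q t + d t * z +
  fine (\int[pi t]_(y in `](0%R : R), +oo[) ((expR (- (z * y)) - 1)%:E))%E.

Definition herglotz_data (R : realType) (q d : R -> R)
  (pi : R -> {measure set R -> \bar R}) : Prop :=
  (forall t, 0 <= t -> 0 <= q t) /\
  (forall T, 0 < T -> (@lebesgue_measure R).-integrable `[0, T] (EFin \o q)) /\
  (forall T, 0 < T -> (@lebesgue_measure R).-integrable `[0, T] (EFin \o d)) /\
  (* t |-> pi_t(B) measurable, hence also t |-> (min{x,1} pi_t)(B) *)
  (forall B : set R, measurable B ->
     measurable_fun (`[0, +oo[ : set R) (fun t : R => pi t B)) /\
  (forall T, 0 < T -> (@lebesgue_measure R).-integrable `[0, T]
      (fun t => \int[pi t]_(y in `](0%R : R), +oo[) (Num.min y 1)%:E)%E).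

(* v is the (restriction to the real half-line (0,oo) of the) absolutely
   continuous reverse evolution family with Herglotz vector field phi:
   for 0 <= t and theta > 0, s |-> v s t theta solves
   d/ds v(s) = phi(v(s), s) a.e. on [0,t], v(t) = theta,
   written as the equivalent Caratheodory integral equation. *)
Definition reverse_evolution_family (R : realType) (phi : R -> R -> R)
  (v : R -> R -> R -> R) : Prop :=
  forall t theta, 0 <= t -> 0 < theta ->
    (forall s, 0 <= s <= t -> 0 < v s t theta) /\
    (@lebesgue_measure R).-integrable `[0, t]
       (fun r => (phi (v r t theta) r)%:E) /\
    (forall s, 0 <= s <= t ->
       v s t theta = theta - \int[@lebesgue_measure R]_(r in `[s, t]) phi (v r t theta) r).

(* A path w : [0,oo) -> [0,oo] in D[0,oo): cadlag, absorbed at 0 and at +oo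
   once it or its left limit reaches these points. *)
Definition left_lim (R : realType) (w : R -> \bar R) (t : R) : \bar R :=
  lim (w u @[u --> t^'-]).

Definition D_path (R : realType) (w : R -> \bar R) : Prop :=
  (forall t, 0 <= t -> (0 <= w t)%E) /\
  (forall t, 0 <= t -> w u @[u --> t^'+] --> w t) /\
  (forall t, 0 < t -> cvg (w u @[u --> t^'-])) /\
  (forall t, 0 <= t -> (w t = 0%E \/ (0 < t /\ left_lim w t = 0%E)) ->
     forall u, t <= u -> w u = 0%E) /\
  (forall t, 0 <= t -> (w t = +oo%E \/ (0 < t /\ left_lim w t = +oo%E)) ->
     forall u, t <= u -> w u = +oo%E).

Definition T0 (R : realType) (w : R -> \bar R) (s : R) : \bar R :=
  ereal_inf [set t%:E | t in [set t | s <= t /\ w t = 0%E]].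

(* Z with probabilities P (s, x) is the branching process associated with v:
   sample paths in D[0,oo), Z_t measurable, and the transition kernel
   k_{s,t}(x, .) = law of Z_t under P^{(s,x)} satisfies
   int_[0,oo) e^{-theta y} k_{s,t}(x,dy) = e^{-x v_{s,t}(theta)};
   k_{s,t}(0,.) = delta_0, k_{s,t}(oo,.) = delta_oo. *)
Definition branching_process (R : realType) (d : measure_display)
  (Omega : measurableType d) (v : R -> R -> R -> R)
  (P : R -> \bar R -> probability Omega R) (Z : R -> Omega -> \bar R) : Prop :=
  (forall w, D_path (fun t => Z t w)) /\
  (forall t, 0 <= t -> measurable_fun setT (Z t)) /\
  (forall s t (x : R) theta, 0 <= s <= t -> 0 <= x -> 0 < theta ->
     (\int[P s x%:E]_(w in [set w | (Z t w < +oo)%E])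
        (expR (- (theta * fine (Z t w))))%:E)%E
     = (expR (- (x * v s t theta)))%:E) /\
  (forall s t, 0 <= s <= t -> P s 0%E [set w | Z t w = 0%E] = 1%E) /\
  (forall s t, 0 <= s <= t -> P s +oo%E [set w | Z t w = +oo%E] = 1%E).

From HB Require Import structures.
From mathcomp Require Import all_boot all_order all_algebra.
From mathcomp Require Import all_classical all_reals all_analysis.
From mathcomp Require Import measurable_realfun.
From mathcomp Require Import ring lra.
Set Implicit Arguments. Unset Strict Implicit. Unset Printing Implicit Defensive.
Import Order.TTheory GRing.Theory Num.Theory.
Import numFieldNormedType.Exports.
Local Open Scope classical_set_scope.
Local Open Scope ring_scope.
Local Notation mu := (@lebesgue_measure _).

(* Since q >= 0 and e^{-zy} - 1 <= 0, the vector field satisfies phi(z, r) <= |d_r| z.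
   On intervals short enough that int |d| <= 1/2, the integral equation for
   s |-> v_{s,t}(theta) then lets v drop at most by half, so covering [s, t] by N such
   intervals gives v_{s,t}(theta) >= theta / 2^N with N independent of theta.
   Hence P^{(s,x)}[Z_t = 0] <= E[e^{-theta Z_t}; Z_t < oo] = e^{-x v_{s,t}(theta)} -> 0
   as theta -> oo, and by absorption at 0 the event {T_0^s < oo} is the countable
   union of the null events {Z_{s+n} = 0}. *)

Lemma Rintegral_itv_split (R : realType) (g : R -> R) (a c b : R) :
  mu.-integrable `[a, b] (EFin \o g) -> a <= c <= b ->
  \int[mu]_(x in `[a, b]) g x =
  \int[mu]_(x in `[a, c]) g x + \int[mu]_(x in `[c, b]) g x.
Proof.
move=> ig /andP[ac cb].
have := @Rintegral_itvB R g (BLeft a) (BRight b) c ig.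
rewrite !bnd_simp => /(_ ac cb) split_ab.
rewrite -(@Rintegral_itv_obnd_cbnd R c (BRight b) g) -?split_ab ?subrKC //.
by apply: integrableS ig => //; apply: subset_itv; rewrite bnd_simp.
Qed.

Lemma itv_step_exists (R : realFieldType) (r t dl N : R) :
  0 <= dl -> 0 <= N -> r <= t -> t - r <= N + dl ->
  exists b, [/\ r <= b, b <= t, b - r <= dl & t - b <= N].
Proof.
move=> dl0 N0 rt tr.
by have [rdt|rdt] := leP (r + dl) t; [exists (r + dl) | exists t]; split; lra.
Qed.

Section backward_integral_equation.
Variables (R : realType) (t th : R) (f k V : R -> R).
Hypothesis intf : mu.-integrable `[0, t] (EFin \o f).
Hypothesis intk : mu.-integrable `[0, t] (EFin \o k).
Hypothesis V_eq : forall r, 0 <= r <= t -> V r = th - \int[mu]_(x in `[r, t]) f x.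
Hypothesis V_gt0 : forall r, 0 <= r <= t -> 0 < V r.
Hypothesis k_ge0 : forall r, 0 <= r <= t -> 0 <= k r.
Hypothesis f_le : forall r, 0 <= r <= t -> f r <= k r * V r.

Let integrable_sub (g : R -> R) a b : 0 <= a -> b <= t ->
  mu.-integrable `[0, t] (EFin \o g) -> mu.-integrable `[a, b] (EFin \o g).
Proof.
by move=> a0 bt; apply: integrableS => //; apply: subset_itv; rewrite bnd_simp.
Qed.

Lemma backward_eq_split a c : 0 <= a <= c -> c <= t ->
  V a = V c - \int[mu]_(x in `[a, c]) f x.
Proof.
move=> /andP[a0 ac] ct; have c0 := le_trans a0 ac; have at_ := le_trans ac ct.
rewrite V_eq ?a0 // V_eq ?c0 // (@Rintegral_itv_split _ _ _ c) ?ac //.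
  by rewrite opprD addrA addrAC.
exact: integrable_sub.
Qed.

Lemma backward_sol_bounded : exists B, forall a, 0 <= a <= t -> V a <= B.
Proof.
exists (th + \int[mu]_(x in `[0, t]) `|f x|) => a /andP[a0 at_].
rewrite V_eq ?a0 // lerD2l.
rewrite (@Rintegral_itv_split _ (fun x => `|f x|) 0 a t) ?a0 //;
  last exact: integrable_norm.
have fa_le : `|\int[mu]_(x in `[a, t]) f x| <= \int[mu]_(x in `[a, t]) `|f x|.
  by apply: le_normr_Rintegral => //; exact: integrable_sub.
have fa_ge0 : 0 <= \int[mu]_(x in `[0, a]) `|f x| by apply: Rintegral_ge0.
by apply: ler_wpDl fa_ge0 (le_trans _ fa_le); rewrite -normrN ler_norm.
Qed.

Variable dl : R.
Hypothesis dl_ge0 : 0 <= dl.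
Hypothesis k_small : forall r c, 0 <= r <= c -> c <= t -> c - r <= dl ->
  \int[mu]_(x in `[r, c]) k x <= 1 / 2.

(* With M := sup_[r, b] V, every c in [r, b] satisfies
   V c = V r + int_r^c f <= V r + M int_r^c k <= V r + M/2. *)
Lemma backward_sol_half r b : 0 <= r <= b -> b <= t -> b - r <= dl ->
  V b / 2 <= V r.
Proof.
move=> /andP[r0 rb] bt bdl.
set E := [set V a | a in `[r, b]].
have Eb : E (V b) by exists b => //=; rewrite in_itv/= rb lexx.
have [B VB] := backward_sol_bounded.
have hsE : has_sup E.
  split; first by exists (V b).
  exists B => y [a]; rewrite /= in_itv/= => /andP[ra ab] <-.
  by apply: VB; rewrite (le_trans r0 ra) (le_trans ab bt).
have VbS : V b <= sup E by exact: sup_upper_bound.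
have S0 : 0 <= sup E.
  by rewrite (le_trans _ VbS) // ltW // V_gt0 // (le_trans r0 rb) bt.
suff SV : sup E <= V r + sup E / 2.
  apply: le_trans (_ : sup E / 2 <= V r); first by rewrite ler_wpM2r.
  by rewrite -(lerD2r (sup E / 2)) -splitr.
apply: ge_sup; first by exists (V b).
move=> y [c]; rewrite /= in_itv/= => /andP[rc cb] <-.
have ct := le_trans cb bt.
rewrite (@backward_eq_split r c) ?r0 //.
have intk_rc : mu.-integrable `[r, c] (EFin \o k) by exact: integrable_sub.
have int_f_le : \int[mu]_(x in `[r, c]) f x <= sup E * \int[mu]_(x in `[r, c]) k x.
  rewrite -RintegralZl //; apply: le_Rintegral => //.
  - exact: integrable_sub.
  - have : mu.-integrable `[r, c] (fun x => (sup E)%:E * (EFin \o k) x)%E.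
      exact: integrableZl.
    by apply: eq_integrable => // x _.
  move=> x; rewrite /= in_itv/= => /andP[rx xc].
  have x0t : 0 <= x <= t by rewrite (le_trans r0 rx) (le_trans xc ct).
  rewrite (le_trans (f_le x0t)) // mulrC ler_wpM2r ?k_ge0 //.
  apply: sup_upper_bound => //; exists x => //=.
  by rewrite in_itv/= rx (le_trans xc cb).
rewrite -addrA lerDl addrC subr_ge0 (le_trans int_f_le) // ler_wpM2l // -div1r.
by apply: k_small; rewrite ?r0 ?rc // (le_trans _ bdl) // lerD2r.
Qed.

Lemma backward_sol_geometric n r : 0 <= r <= t -> t - r <= n%:R * dl ->
  th / 2 ^+ n <= V r.
Proof.
elim: n r => [|n IH] r /andP[r0 rt].
  rewrite mul0r expr0 divr1 subr_le0 => tr.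
  have -> : r = t by apply/eqP; rewrite eq_le rt.
  by rewrite V_eq ?(le_trans r0 rt) ?lexx // set_itv1 Rintegral_set1 subr0.
rewrite -natr1 mulrDl mul1r => tr.
have [b [rb bt bdl tb]] := itv_step_exists dl_ge0 (mulr_ge0 (ler0n _ n) dl_ge0) rt tr.
have Vb := IH b; rewrite (le_trans r0 rb) bt in Vb.
apply: le_trans (backward_sol_half _ bt bdl); last by rewrite r0.
by rewrite exprS invfM mulrA mulrAC ler_pM2r ?Vb.
Qed.

End backward_integral_equation.

Lemma Rintegral_normr_itv_abs_continuous (R : realType) (a b e : R) (g : R -> R) :
  mu.-integrable `[a, b] (EFin \o g) -> 0 < e ->
  exists dl, 0 < dl /\ forall r c, a <= r <= c -> c <= b -> c - r <= dl ->
    \int[mu]_(x in `[r, c]) `|g x| <= e.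
Proof.
move=> ig e0.
have igT : mu.-integrable setT (EFin \o (g \_ `[a, b])).
  by rewrite -restrict_EFin; apply/integrable_restrict => //=; rewrite setTI.
have [dl [dl0 small]] := integral_normr_continuous igT e0.
exists (dl / 2); split; first by rewrite divr_gt0.
move=> r c /andP[ar rc] cb crd.
have -> : \int[mu]_(x in `[r, c]) `|g x| =
           \int[mu]_(x in `[r, c]) `|(g \_ `[a, b]) x|.
  apply: eq_Rintegral => x; rewrite inE/= in_itv/= => /andP[rx xc].
  by rewrite patchE ifT // inE/= in_itv/= (le_trans ar rx) (le_trans xc cb).
apply/ltW/small => //; rewrite [X in (X < _)%E](lebesgue_measure_itv `[r, c])/=.
case: ifP => _; last by rewrite lte_fin.
by rewrite -EFinD lte_fin; lra.
Qed.

Lemma reverse_evolution_linear_lb (R : realType) (phi : R -> R -> R)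
    (v : R -> R -> R -> R) (k : R -> R) (t : R) :
  reverse_evolution_family phi v -> 0 <= t ->
  mu.-integrable `[0, t] (EFin \o k) -> (forall r, 0 <= r <= t -> 0 <= k r) ->
  (forall z r, 0 < z -> 0 <= r <= t -> phi z r <= k r * z) ->
  exists c, 0 < c /\ forall s th, 0 <= s <= t -> 0 < th -> c * th <= v s t th.
Proof.
move=> hv t0 intk k_ge0 phi_le.
have half_gt0 : 0 < 1 / 2 :> R by rewrite divr_gt0.
have [dl [dl0 k_small]] := Rintegral_normr_itv_abs_continuous intk half_gt0.
have k_le : forall r c, 0 <= r <= c -> c <= t -> c - r <= dl ->
    \int[mu]_(x in `[r, c]) k x <= 1 / 2.
  move=> r c rc ct crd.
  have -> : \int[mu]_(x in `[r, c]) k x = \int[mu]_(x in `[r, c]) `|k x|.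
    apply: eq_Rintegral => x; rewrite inE/= in_itv/= => /andP[rx xc].
    case/andP: rc => r0 _.
    by rewrite ger0_norm // k_ge0 // (le_trans r0 rx) (le_trans xc ct).
  exact: k_small.
pose N := Num.Def.archi_bound (t / dl).
have tN : t <= N%:R * dl.
  by rewrite -ler_pdivrMr // ltW // archi_boundP // divr_ge0 // ltW.
exists (2 ^+ N)^-1; split; first by rewrite invr_gt0 exprn_gt0.
move=> s th st th0; have [V_gt0 [intf V_eq]] := hv t th t0 th0.
have f_le : forall r, 0 <= r <= t -> phi (v r t th) r <= k r * v r t th.
  by move=> r rt; exact: phi_le (V_gt0 r rt) rt.
rewrite mulrC; apply: (@backward_sol_geometric R t th (fun r => phi (v r t th) r)
  k (fun r => v r t th) intf intk V_eq V_gt0 k_ge0 f_le _ (ltW dl0) k_le) => //.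
by case/andP: st => s0 _; rewrite (le_trans _ tN) // lerBlDr lerDl.
Qed.

Lemma herglotz_phi_le (R : realType) (q d : R -> R)
    (pi : R -> {measure set R -> \bar R}) (z r : R) :
  0 <= q r -> 0 <= z -> herglotz_phi q d pi z r <= d r * z.
Proof.
move=> q0 z0; rewrite /herglotz_phi.
set I := (\int[pi r]_(y in _) _)%E.
have I_le0 : (I <= 0)%E.
  rewrite /I integralE (eq_integral (cst 0%E)); last first.
    apply: le0_funeposE => y; rewrite /= in_itv/= andbT => y0.
    by rewrite lee_fin subr_le0 expR_le1 oppr_le0 mulr_ge0 // ltW.
  rewrite integral0 sub0e oppe_le0; apply: integral_ge0 => y _.
  exact: funeneg_ge0.
have := fine_le0 I_le0; lra.
Qed.

Lemma expR_Ninv_le (R : realType) (e : R) : 0 < e -> expR (- e^-1) <= e.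
Proof.
move=> e0; rewrite expRN -[leRHS]invrK lef_pV2 ?posrE ?expR_gt0 ?invr_gt0 //.
by apply: le_trans (expR_ge1Dx _); rewrite lerDr.
Qed.

Lemma measurable_fun_level_set (dO : measure_display) (Omega : measurableType dO)
    (R : realType) (f : Omega -> \bar R) (a : \bar R) :
  measurable_fun setT f -> measurable [set w | f w = a].
Proof.
by move=> mf; have := mf measurableT [set a] (emeasurable_set1 _); rewrite setTI.
Qed.

Lemma prob_absorbed_le_expR (R : realType) (dO : measure_display)
    (Omega : measurableType dO) (v : R -> R -> R -> R)
    (P : R -> \bar R -> probability Omega R) (Z : R -> Omega -> \bar R) s t x th :
  branching_process v P Z -> 0 <= s <= t -> 0 <= x -> 0 < th ->
  (P s x%:E [set w | Z t w = 0%E] <= (expR (- (x * v s t th)))%:E)%E.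
Proof.
move=> [_ [mZ [laplace _]]] st x0 th0.
have mZt : measurable_fun setT (Z t).
  by apply: mZ; case/andP: st => s0; exact: le_trans.
have m0 : measurable [set w | Z t w = 0%E] by exact: measurable_fun_level_set.
have mfin : measurable [set w | (Z t w < +oo)%E].
  rewrite (_ : [set w | _] = ~` [set w | Z t w = +oo%E]).
    by apply/measurableC/measurable_fun_level_set.
  by apply/seteqP; split => w /=; rewrite ltey => /eqP.
rewrite -laplace //.
have mg : measurable_fun [set w | (Z t w < +oo)%E]
    (fun w => (expR (- (th * fine (Z t w))))%:E).
  have -> : (fun w => (expR (- (th * fine (Z t w))))%:E) =
      EFin \o (expR \o (( *%R^~ (- th)) \o (fine \o Z t))).
    by apply/funext => w /=; rewrite mulrN mulrC.
  apply/measurable_EFinP; apply: measurableT_comp; first exact: measurable_expR.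
  apply: measurableT_comp; first exact: mulrr_measurable.
  apply: measurableT_comp; first exact: fine_measurable.
  exact: measurable_funTS.
apply: (le_trans _ (ge0_subset_integral _ m0 mfin mg _ _)).
- rewrite (eq_integral (cst 1%E)); last first.
    by move=> w; rewrite inE /= => ->; rewrite mulr0 oppr0 expR0.
  by rewrite integral_cst // mul1e.
- by move=> w _; rewrite lee_fin expR_ge0.
- by move=> w /= ->.
Qed.

Lemma prob_absorbed_eq0 (R : realType) (q d : R -> R)
    (pi : R -> {measure set R -> \bar R}) (v : R -> R -> R -> R)
    (dO : measure_display) (Omega : measurableType dO)
    (P : R -> \bar R -> probability Omega R) (Z : R -> Omega -> \bar R) s t x :
  herglotz_data q d pi ->
  reverse_evolution_family (herglotz_phi q d pi) v ->
  branching_process v P Z ->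
  0 <= s <= t -> 0 < x -> P s x%:E [set w | Z t w = 0%E] = 0%E.
Proof.
move=> hd hv bp st x0; have /andP[s0 s_le_t] := st.
have t0 := le_trans s0 s_le_t.
have [q_ge0 [_ [intd _]]] := hd.
have intd_t : mu.-integrable `[0, t] (EFin \o d).
  apply: integrableS (intd (t + 1) (ltr_wpDl t0 ltr01)) => //.
  by apply: subset_itv; rewrite bnd_simp // lerDl.
have phi_le : forall z r, 0 < z -> 0 <= r <= t ->
    herglotz_phi q d pi z r <= `|d r| * z.
  move=> z r z0 /andP[r0 _].
  apply: le_trans (herglotz_phi_le d pi (q_ge0 r r0) (ltW z0)) _.
  by apply: ler_wpM2r; [exact: ltW | exact: ler_norm].
have [c [c0 v_ge]] := reverse_evolution_linear_lb hv t0 (integrable_norm intd_t)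
  (fun r _ => normr_ge0 (d r)) phi_le.
apply/eqP; rewrite eq_le measure_ge0 andbT.
apply/lee_addgt0Pr => e e0; rewrite add0e.
pose th := (x * c * e)^-1.
have th0 : 0 < th by rewrite invr_gt0 !mulr_gt0.
apply: (le_trans (prob_absorbed_le_expR bp st (ltW x0) th0)).
have xcth : x * (c * th) = e^-1 by rewrite /th; field; rewrite !gt_eqF.
rewrite lee_fin (le_trans _ (expR_Ninv_le e0)) // ler_expR lerN2 -xcth.
by apply: ler_wpM2l; [exact: ltW | exact: v_ge s th st th0].
Qed.

Lemma D_path_T0_lt_pinfty (R : realType) (w : R -> \bar R) (s : R) :
  0 <= s -> D_path w -> (T0 w s < +oo)%E <-> exists n : nat, w (s + n%:R) = 0%E.
Proof.
move=> s0 [_ [_ [_ [absorb0 _]]]]; split.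
- rewrite /T0 => T0_fin.
  have [u [su wu0]] : exists u, s <= u /\ w u = 0%E.
    apply: contrapT => nohit; move: T0_fin.
    rewrite (_ : [set _%:E | _ in _] = set0) ?ereal_inf0 ?ltxx //.
    by apply/seteqP; split => y // [u [su wu] _]; apply: nohit; exists u.
  exists (Num.Def.archi_bound (u - s)).
  apply: (absorb0 u (le_trans s0 su) (or_introl wu0)).
  by rewrite -lerBlDl ltW // archi_boundP // subr_ge0.
- move=> [n wn0]; apply: le_lt_trans (ltry (s + n%:R)).
  by apply: ereal_inf_lbound; exists (s + n%:R) => //; split => //; rewrite lerDl.
Qed.

Theorem mainTheorem15 (R : realType) (q d : R -> R)
  (pi : R -> {measure set R -> \bar R}) (v : R -> R -> R -> R)
  (dO : measure_display) (Omega : measurableType dO)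
  (P : R -> \bar R -> probability Omega R) (Z : R -> Omega -> \bar R) :
  herglotz_data q d pi ->
  reverse_evolution_family (herglotz_phi q d pi) v ->
  branching_process v P Z ->
  forall (s x : R), 0 <= s -> 0 < x ->
    P s x%:E [set w | (T0 (fun t => Z t w) s < +oo)%E] = 0%E.
Proof.
move=> hd hv bp s x s0 x0; have [paths [mZ _]] := bp.
have hit_eq : [set w | (T0 (fun t => Z t w) s < +oo)%E] =
    \bigcup_n [set w | Z (s + n%:R) w = 0%E].
  apply/seteqP; split => w /=.
  - by move=> /(D_path_T0_lt_pinfty s0 (paths w))[n wn0]; exists n.
  - by move=> [n _ wn0]; apply/(D_path_T0_lt_pinfty s0 (paths w)); exists n.
have m_hit (n : nat) : measurable [set w | Z (s + n%:R) w = 0%E].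
  by apply/measurable_fun_level_set/mZ; rewrite addr_ge0.
rewrite hit_eq; apply: measure_negligible; first exact: bigcupT_measurable.
apply: negligible_bigcup => n; apply/negligibleP; first exact: m_hit.
by apply: prob_absorbed_eq0 hd hv bp _ x0; rewrite s0 lerDl ler0n.
Qed.
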